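(* Let $p,q\ge1$, $N\ge1$, and let $\mu$ be a $q\times p$ matrix of measures. Assume that $\mathscr M_N$, $\mathscr M_{N,(b,0)}$ ($b\in\{1,\dots,q\}$) and $\mathscr M_{N,(0,a)}$ ($a\in\{1,\dots,p\}$) admit Gauss--Borel factorizations $\mathscr M_{N,(n,m)}=\mathscr L_{N,(n,m)}^{-1}\mathscr U_{N,(n,m)}^{-1}$ with lower unitriangular $\mathscr L_{N,(n,m)}$, let $U_b:=\mathscr U_{N,(b,0)}^{-1}\mathscr U_{N,(b-1,0)}$ and $L_a:=\mathscr L_{N,(0,a-1)}\mathscr L_{N,(0,a)}^{-1}$, and write $U_{b,n}:=(U_b)_{n,n}$, $L_{a,n}:=(L_a)_{n,n-1}$. Then for $a\in\{1,\dots,p\}$, $b\in\{1,\dots,q\}$: \[L_{a,n}=(\mathscr L_{N,(0,a-1)})_{n,n-1}-(\mathscr L_{N,(0,a)})_{n,n-1},\quad n\in\{1,\dots,N-1\},\] \[U_{b,n}=\frac{(\mathscr U_{N,(b-1,0)})_{n,n}}{(\mathscr U_{N,(b,0)})_{n,n}},\quad n\in\{0,\dots,N-1\},\] \[L_{a,n}=\frac{(\mathscr U_{N,(0,a)})_{n-1,n-1}}{(\mathscr U_{N,(0,a-1)})_{n,n}},\quad n\in\{1,\dots,N-1\},\] \[U_{b,n}=(1-\delta_{n,0})(\mathscr L_{N,(b,0)})_{n,n-1}-(\mathscr L_{N,(b-1,0)})_{n+1,n},\quad n\in\{0,\dots,N-2\}.\]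
   Context: All matrices are indexed from $0$. Fix integers $p,q\ge1$ and a $q\times p$ matrix $\mu$ of real measures on $\mathbb R$ with finite moments. For $r,n\ge1$, $X^{[n]}_{[r]}(x)$ is the $n\times r$ matrix whose row $k$ is $x^{\lfloor k/r\rfloor}e_{k\bmod r}^\top$ ($e_0,\dots,e_{r-1}$ standard basis of $\mathbb R^r$). Moment matrices: $\mathscr M^{[n,m]}=\int X^{[n]}_{[q]}\,\mathrm d\mu\,(X^{[m]}_{[p]})^\top$, $\mathscr M_n=\mathscr M^{[n,n]}$. $\mathfrak X_{[r,1]}(x)$ is the $r\times r$ matrix with $(\mathfrak X_{[r,1]})_{i,i+1}=1$ ($0\le i\le r-2$), $(\mathfrak X_{[r,1]})_{r-1,0}=x$, other entries $0$. Christoffel perturbations: $\mathrm d\mu_{(n,m)}:=\mathfrak X_{[q,1]}^n\,\mathrm d\mu\,(\mathfrak X_{[p,1]}^m)^\top$, with $\mathscr M_{N,(n,m)}$ the $N\times N$ moment matrix of $\mu_{(n,m)}$; $(n,m)=(0,0)$ gives $\mu$ itself, with factors $\mathscr L_N,\mathscr U_N$. *)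

From HB Require Import structures.
From mathcomp Require Import all_boot all_order all_algebra.
From mathcomp Require Import all_classical all_reals all_analysis.

Set Implicit Arguments.
Unset Strict Implicit.
Unset Printing Implicit Defensive.

Import Order.TTheory GRing.Theory Num.Theory.
Local Open Scope ring_scope.

(* A real (signed) measure on R, given through a decomposition
   mu = mu.1 - mu.2 into two (positive) measures on the Borel sets of R. *)
Definition realmeasure (R : realType) :=
  ({measure set R -> \bar R} * {measure set R -> \bar R})%type.

Definition integ (R : realType) (mu : realmeasure R) (f : R -> R) : R :=
  fine (\int[mu.1]_x (f x)%:E)%E - fine (\int[mu.2]_x (f x)%:E)%E.

Definition finite_moments (R : realType) (p q : nat)
  (mu : 'I_q -> 'I_p -> realmeasure R) : Prop :=
  forall (i : 'I_q) (j : 'I_p) (k : nat),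
    (mu i j).1.-integrable setT (fun x : R => (x ^+ k)%:E) /\
    (mu i j).2.-integrable setT (fun x : R => (x ^+ k)%:E).

Definition Xmat (R : pzRingType) (n r : nat) (x : R) : 'M[R]_(n, r) :=
  \matrix_(k < n, j < r) (x ^+ (k %/ r)%N * ((j : nat) == (k %% r)%N)%:R).

Definition Xfrak (R : pzRingType) (r : nat) (x : R) : 'M[R]_r :=
  \matrix_(i < r, j < r)
    (if (j : nat) == i.+1 then 1
     else if ((i : nat) == r.-1) && ((j : nat) == 0%N) then x else 0).

Fixpoint mxpow (R : pzRingType) (r : nat) (A : 'M[R]_r) (n : nat) : 'M[R]_r :=
  match n with
  | 0%N => 1%:M
  | n'.+1 => mxpow A n' *m A
  end.

(* N x N moment matrix of the Christoffel perturbation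
   d mu_{(n,m)} = Xfrak_q^n d mu (Xfrak_p^m)^T :
   entry (k,l) = sum_{i,j} int (X_q Xfrak_q^n)_{k,i} (X_p Xfrak_p^m)_{l,j} d mu_{i,j} *)
Definition moment_mx (R : realType) (p q : nat)
  (mu : 'I_q -> 'I_p -> realmeasure R) (n m N : nat) : 'M[R]_N :=
  \matrix_(k < N, l < N)
    \sum_(i < q) \sum_(j < p)
      integ (mu i j) (fun x =>
        (Xmat N q x *m mxpow (Xfrak q x) n) k i *
        (Xmat N p x *m mxpow (Xfrak p x) m) l j).

Definition lower_unitriangular (R : pzRingType) (N : nat) (L : 'M[R]_N) : Prop :=
  (forall i j : 'I_N, (i < j)%N -> L i j = 0) /\ (forall i : 'I_N, L i i = 1).

Definition upper_triangular (R : pzRingType) (N : nat) (U : 'M[R]_N) : Prop :=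
  forall i j : 'I_N, (j < i)%N -> U i j = 0.

Definition GaussBorel (R : comUnitRingType) (N : nat) (M L U : 'M[R]_N) : Prop :=
  [/\ lower_unitriangular L, upper_triangular U, U \in unitmx &
      M = invmx L *m invmx U].

(* entry (i,j) of an N x N matrix, indices given as naturals (0 if out of range) *)
Definition mxe (R : pzRingType) (N : nat) (A : 'M[R]_N) (i j : nat) : R :=
  match @insub _ (fun k => k < N)%N _ i, @insub _ (fun k => k < N)%N _ j with
  | Some i', Some j' => A i' j'
  | _, _ => 0
  end.

(* The Christoffel perturbations only shift the moment matrix: since the rows
   of X_[r] Xfrak_[r] are the rows of X_[r] moved up by one, M_(b,0) is
   M_(b-1,0) with its first row removed and M_(0,a) is M_(0,a-1) with its
   first column removed.  Hence L_(0,a-1) M_(0,a) is (U_(0,a-1))^-1 with its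
   columns shifted, an upper Hessenberg matrix, and in
   L_a = (L_(0,a-1) M_(0,a)) U_(0,a) only one term survives on the
   subdiagonal; dually U_b = L_(b,0) (M_(b,0) U_(b-1,0)) where the second
   factor is (L_(b-1,0))^-1 with its rows shifted.  The two other formulas
   only use that L_a and U_b are quotients of triangular matrices, whose
   diagonal and subdiagonal are read off the factors. *)

From HB Require Import structures.
From mathcomp Require Import all_boot all_order all_algebra.
From mathcomp Require Import all_classical all_reals all_analysis.
From mathcomp Require Import zify.
Import Order.TTheory GRing.Theory Num.Theory.
Local Open Scope ring_scope.

Set Implicit Arguments.
Unset Strict Implicit.
Unset Printing Implicit Defensive.

Section MulmxEntries.
Variables (R : pzRingType) (m n p : nat).
Implicit Types (A : 'M[R]_(m, n)) (B : 'M[R]_(n, p)).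

Lemma mulmx_single_term A B i j (k0 : 'I_n) :
  (forall k, k != k0 -> A i k * B k j = 0) -> (A *m B) i j = A i k0 * B k0 j.
Proof. by move=> vanish; rewrite mxE (bigD1 k0) //= big1 ?addr0. Qed.

Lemma mulmx_two_terms A B i j (k0 k1 : 'I_n) : k0 != k1 ->
  (forall k, k != k0 -> k != k1 -> A i k * B k j = 0) ->
  (A *m B) i j = A i k0 * B k0 j + A i k1 * B k1 j.
Proof.
move=> k01 vanish; rewrite mxE (bigD1 k0) //= (bigD1 k1) 1?eq_sym //=.
by rewrite big1 ?addr0 // => k /andP[]; apply: vanish.
Qed.

End MulmxEntries.

Section TriangularProducts.
Variables (R : pzRingType) (N : nat).
Implicit Types A B : 'M[R]_N.

Lemma mulmx_trig_diag A B i :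
  is_trig_mx A -> is_trig_mx B -> (A *m B) i i = A i i * B i i.
Proof.
move=> /is_trig_mxP tA /is_trig_mxP tB; apply: mulmx_single_term => k.
rewrite -val_eqE neq_ltn => /orP[ki | ik]; first by rewrite tB ?mulr0.
by rewrite tA ?mul0r.
Qed.

Lemma mulmx_trig_subdiag A B (i j : 'I_N) : is_trig_mx A -> is_trig_mx B ->
  i = j.+1 :> nat -> (A *m B) i j = A i j * B j j + A i i * B i j.
Proof.
move=> /is_trig_mxP tA /is_trig_mxP tB ij.
apply: mulmx_two_terms => [|k]; first by rewrite -val_eqE /=; lia.
rewrite -!val_eqE /= => kj ki; have [ik | ki'] := ltnP i k.
  by rewrite tA ?mul0r.
by rewrite tB ?mulr0 //; lia.
Qed.

End TriangularProducts.

Section TriangularInverse.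
Variables (R : fieldType) (N : nat).
Implicit Types A : 'M[R]_N.

Lemma trig_unitmx_diag_neq0 A i : is_trig_mx A -> A \in unitmx -> A i i != 0.
Proof.
move=> tA; rewrite unitmxE det_trig // unitfE prodf_seq_neq0.
by move=> /allP/(_ i (mem_index_enum i)).
Qed.

Lemma invmx_trig A : is_trig_mx A -> A \in unitmx -> is_trig_mx (invmx A).
Proof.
move=> tA uA; apply/is_trig_mxP.
suff zero_above : forall n (i j : 'I_N), i = n :> nat -> (i < j)%N ->
    invmx A i j = 0 by move=> i j; apply: zero_above.
elim/ltn_ind=> n IH i j ni ij.
have /eqP := congr1 (fun M : 'M[R]_N => M i j) (mulmxV uA).
rewrite (mulmx_single_term (k0 := i)) => [|k]; last first.
  rewrite -val_eqE neq_ltn => /orP[ki | ik].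
    by rewrite (IH k) ?mulr0 -?ni //; apply: ltn_trans ij.
  by move/is_trig_mxP: tA => ->; rewrite ?mul0r.
have Aii_neq0 := trig_unitmx_diag_neq0 i tA uA.
by rewrite mxE -val_eqE (ltn_eqF ij) mulf_eq0 (negbTE Aii_neq0) => /eqP.
Qed.

Lemma invmx_trig_diag A i :
  is_trig_mx A -> A \in unitmx -> invmx A i i = (A i i)^-1.
Proof.
move=> tA uA; have := congr1 (fun M : 'M[R]_N => M i i) (mulmxV uA).
rewrite mulmx_trig_diag ?invmx_trig // mxE eqxx => Ai_invAi.
have Aii_neq0 := trig_unitmx_diag_neq0 i tA uA.
by apply: (mulfI Aii_neq0); rewrite Ai_invAi mulfV.
Qed.

Lemma lower_unitriangular_trig A : lower_unitriangular A -> is_trig_mx A.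
Proof. by case=> tA _; apply/is_trig_mxP. Qed.

Lemma lower_unitriangular_unitmx A : lower_unitriangular A -> A \in unitmx.
Proof.
move=> lA; rewrite unitmxE det_trig ?lower_unitriangular_trig //.
by rewrite big1 ?unitr1 // => i _; case: lA.
Qed.

Lemma invmx_lower_unitriangular A :
  lower_unitriangular A -> lower_unitriangular (invmx A).
Proof.
move=> lA; have tA := lower_unitriangular_trig lA.
have uA := lower_unitriangular_unitmx lA.
split=> [|i]; first exact/is_trig_mxP/invmx_trig.
by rewrite invmx_trig_diag //; case: lA => _ ->; rewrite invr1.
Qed.

Lemma invmx_lower_unitriangular_subdiag A (i j : 'I_N) :
  lower_unitriangular A -> i = j.+1 :> nat -> invmx A i j = - A i j.
Proof.
move=> lA ij; have uA := lower_unitriangular_unitmx lA.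
have := congr1 (fun M : 'M[R]_N => M i j) (mulmxV uA).
rewrite mulmx_trig_subdiag ?invmx_trig ?lower_unitriangular_trig //.
rewrite (invmx_lower_unitriangular lA).2 lA.2 mulr1 mul1r mxE.
have -> : (i == j) = false by apply/negbTE/eqP => eij; move: ij; rewrite eij; lia.
by move=> /eqP; rewrite addrC addr_eq0 => /eqP.
Qed.

Lemma upper_triangular_trmx A : upper_triangular A -> is_trig_mx A^T.
Proof. by move=> uA; apply/is_trig_mxP => i j ij; rewrite mxE uA. Qed.

Lemma invmx_upper A : upper_triangular A -> A \in unitmx ->
  upper_triangular (invmx A) /\ forall i, invmx A i i = (A i i)^-1.
Proof.
move=> uA unitA; have tAT := upper_triangular_trmx uA.
have unitAT : A^T \in unitmx by rewrite unitmx_tr.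
split=> [i j ji | i].
  by have /is_trig_mxP/(_ j i ji) := invmx_trig tAT unitAT; rewrite -trmx_inv mxE.
by have := invmx_trig_diag i tAT unitAT; rewrite -trmx_inv !mxE.
Qed.

End TriangularInverse.

Section GaussBorelFactors.
Variables (R : fieldType) (N : nat).
Implicit Types M L U : 'M[R]_N.

Lemma GaussBorel_lower_mulmx M L U : GaussBorel M L U -> L *m M = invmx U.
Proof.
by case=> lL _ _ ->; rewrite mulmxA mulmxV ?mul1mx ?lower_unitriangular_unitmx.
Qed.

Lemma GaussBorel_mulmx_upper M L U : GaussBorel M L U -> M *m U = invmx L.
Proof. by case=> _ _ uU ->; rewrite mulmxKV. Qed.

Lemma mulmx_lower_unitriangular_inv_subdiag L1 L2 (i j : 'I_N) :
  lower_unitriangular L1 -> lower_unitriangular L2 -> i = j.+1 :> nat ->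
  (L1 *m invmx L2) i j = L1 i j - L2 i j.
Proof.
move=> lL1 lL2 ij; have linvL2 := invmx_lower_unitriangular lL2.
rewrite mulmx_trig_subdiag ?lower_unitriangular_trig // linvL2.2 lL1.2.
by rewrite invmx_lower_unitriangular_subdiag // mulr1 mul1r.
Qed.

Lemma mulmx_inv_upper_diag U1 U2 i :
  upper_triangular U1 -> U1 \in unitmx -> upper_triangular U2 ->
  (invmx U1 *m U2) i i = U2 i i / U1 i i.
Proof.
move=> uU1 unitU1 uU2; have [uinvU1 invd1] := invmx_upper uU1 unitU1.
rewrite (mulmx_single_term (k0 := i)) ?invd1 1?mulrC // => k.
rewrite -val_eqE neq_ltn => /orP[ki | ik]; first by rewrite uinvU1 ?mul0r.
by rewrite uU2 ?mulr0.
Qed.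

Lemma GaussBorel_col_shift_subdiag M1 L1 U1 M2 L2 U2 (i j : 'I_N) :
  GaussBorel M1 L1 U1 -> GaussBorel M2 L2 U2 ->
  (forall r c c' : 'I_N, c' = c.+1 :> nat -> M2 r c = M1 r c') ->
  i = j.+1 :> nat -> (L1 *m invmx L2) i j = U2 j j / U1 i i.
Proof.
move=> GB1 GB2 shift ij; have [_ uU1 unitU1 _] := GB1.
have [_ uU2 unitU2 eM2] := GB2.
have [uinvU1 invd1] := invmx_upper uU1 unitU1.
have L1M2E (r c c' : 'I_N) : c' = c.+1 :> nat -> (L1 *m M2) r c = invmx U1 r c'.
  move=> cc'; rewrite -(GaussBorel_lower_mulmx GB1) !mxE.
  by apply: eq_bigr => k _; rewrite (shift k c c').
have -> : L1 *m invmx L2 = L1 *m M2 *m U2 by rewrite eM2 mulmxA mulmxKV.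
rewrite (mulmx_single_term (k0 := j)) => [|k]; last first.
  rewrite -val_eqE neq_ltn => /orP[kj | jk]; last by rewrite uU2 ?mulr0.
  have k1N : (k.+1 < N)%N by apply: leq_ltn_trans (ltn_ord j).
  by rewrite (L1M2E _ _ (Ordinal k1N)) // uinvU1 ?mul0r //= ij.
by rewrite (L1M2E _ _ i) // invd1 mulrC.
Qed.

Lemma GaussBorel_row_shift_diag M1 L1 U1 M2 L2 U2 (i i' j : 'I_N) :
  GaussBorel M1 L1 U1 -> GaussBorel M2 L2 U2 ->
  (forall r r' c : 'I_N, r' = r.+1 :> nat -> M2 r c = M1 r' c) ->
  i' = i.+1 :> nat -> j = i.-1 :> nat ->
  (invmx U2 *m U1) i i = (1 - (i == 0 :> nat)%:R) * L2 i j - L1 i' i.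
Proof.
move=> GB1 GB2 shift ii' ji; have [lL1 _ _ _] := GB1; have [lL2 _ _ _] := GB2.
have [/is_trig_mxP tL2 d2] := (lower_unitriangular_trig lL2, lL2.2).
have [tinvL1 invd1] := invmx_lower_unitriangular lL1.
have M2U1E (r r' c : 'I_N) : r' = r.+1 :> nat -> (M2 *m U1) r c = invmx L1 r' c.
  move=> rr'; rewrite -(GaussBorel_mulmx_upper GB1) !mxE.
  by apply: eq_bigr => k _; rewrite (shift r r').
have -> : invmx U2 *m U1 = L2 *m (M2 *m U1).
  by rewrite mulmxA (GaussBorel_lower_mulmx GB2).
have invL1_subdiag : (M2 *m U1) i i = - L1 i' i.
  by rewrite (M2U1E _ i') // invmx_lower_unitriangular_subdiag.
case: (posnP i) => [i0 | i_gt0].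
  have -> : j = i by apply: val_inj; rewrite /= ji i0.
  rewrite (mulmx_single_term (k0 := i)) => [|k]; last first.
    by rewrite -val_eqE /= neq_ltn i0 ltn0 /= => k_gt0; rewrite tL2 ?mul0r ?i0.
  by rewrite subrr mul0r sub0r d2 mul1r.
have ji_neq : j != i by rewrite -val_eqE /= ji; lia.
have others0 k : k != j -> k != i -> L2 i k * (M2 *m U1) k i = 0.
  rewrite -!val_eqE /= => kj ki; have [ik | ki'] := ltnP i k.
    by rewrite tL2 ?mul0r.
  have k1N : (k.+1 < N)%N by apply: leq_ltn_trans (ltn_ord i); lia.
  by rewrite (M2U1E _ (Ordinal k1N)) // tinvL1 ?mulr0 //=; lia.
rewrite (mulmx_two_terms ji_neq others0).
rewrite invL1_subdiag d2 mul1r (M2U1E _ i) ?invd1 ?ji ?prednK // mulr1.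
by rewrite subr0 mul1r.
Qed.

End GaussBorelFactors.

Section MomentShift.
Variable R : pzRingType.

Lemma mxpowSl r (A : 'M[R]_r) n : mxpow A n.+1 = A *m mxpow A n.
Proof.
elim: n => [|n IH]; first by rewrite /= mul1mx mulmx1.
by rewrite -[LHS]/(mxpow A n.+1 *m A) {1}IH -mulmxA.
Qed.

Lemma Xmat_mulmx_Xfrak N r (x : R) (k k' : 'I_N) (j : 'I_r) : k' = k.+1 :> nat ->
  (Xmat N r x *m Xfrak r x) k j = Xmat N r x k' j.
Proof.
move=> kk'; have r_gt0 : (0 < r)%N by apply: leq_ltn_trans (ltn_ord j).
rewrite (mulmx_single_term (k0 := Ordinal (ltn_pmod k r_gt0))) => [|l]; last first.
  by rewrite mxE -val_eqE => /negbTE->; rewrite mulr0 mul0r.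
rewrite !mxE eqxx mulr1 kk' /=.
have k1E : k.+1 = (k %/ r * r + (k %% r).+1)%N by rewrite addnS -divn_eq.
have [s1_lt | | s1_eq] := ltngtP (k %% r).+1 r; last 2 first.
- by rewrite ltnNge ltn_pmod.
- rewrite k1E s1_eq -mulSnr mulnK // modnMl exprSr -mulrA (ltn_eqF (ltn_ord j)).
  rewrite -[r in r.-1]s1_eq eqxx.
  by case: (_ == 0)%N; rewrite ?mulr1 ?mulr0.
rewrite k1E divnMDl // modnMDl (divn_small s1_lt) (modn_small s1_lt) addn0.
case: (_ == _) => //=.
have -> : (k %% r == r.-1)%N = false.
  by apply/eqP => s_last; move: s1_lt; rewrite s_last prednK // ltnn.
by rewrite mulr0.
Qed.

Lemma Xmat_mulmx_Xfrak_pow N r (x : R) n (k k' : 'I_N) (j : 'I_r) :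
  k' = k.+1 :> nat ->
  (Xmat N r x *m mxpow (Xfrak r x) n.+1) k j =
  (Xmat N r x *m mxpow (Xfrak r x) n) k' j.
Proof.
move=> kk'; rewrite mxpowSl mulmxA !mxE; apply: eq_bigr => l _.
by rewrite (Xmat_mulmx_Xfrak _ _ kk').
Qed.

End MomentShift.

Section ChristoffelMoments.
Variables (R : realType) (p q : nat) (mu : 'I_q -> 'I_p -> realmeasure R).

Lemma moment_mx_row_shift b N (k k' l : 'I_N) : (0 < b)%N ->
  k' = k.+1 :> nat -> moment_mx mu b 0 N k l = moment_mx mu b.-1 0 N k' l.
Proof.
case: b => // b _ kk'; rewrite !mxE; apply: eq_bigr => i _; apply: eq_bigr => j _.
by congr integ; apply: funext => x; rewrite (Xmat_mulmx_Xfrak_pow _ _ _ kk').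
Qed.

Lemma moment_mx_col_shift a N (k l l' : 'I_N) : (0 < a)%N ->
  l' = l.+1 :> nat -> moment_mx mu 0 a N k l = moment_mx mu 0 a.-1 N k l'.
Proof.
case: a => // a _ ll'; rewrite !mxE; apply: eq_bigr => i _; apply: eq_bigr => j _.
by congr integ; apply: funext => x; rewrite (Xmat_mulmx_Xfrak_pow _ _ _ ll').
Qed.

End ChristoffelMoments.

Lemma mxeE (R : pzRingType) N (A : 'M[R]_N) i j (hi : (i < N)%N) (hj : (j < N)%N) :
  mxe A i j = A (Ordinal hi) (Ordinal hj).
Proof. by rewrite /mxe (insubT (fun k => k < N)%N hi) (insubT (fun k => k < N)%N hj). Qed.

Theorem mainTheorem3 (R : realType) (p q N : nat)
  (mu : 'I_q -> 'I_p -> realmeasure R) (L U : nat -> nat -> 'M[R]_N) :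
  (1 <= p)%N -> (1 <= q)%N -> (1 <= N)%N ->
  finite_moments mu ->
  GaussBorel (moment_mx mu 0 0 N) (L 0%N 0%N) (U 0%N 0%N) ->
  (forall b, (1 <= b <= q)%N ->
     GaussBorel (moment_mx mu b 0 N) (L b 0%N) (U b 0%N)) ->
  (forall a, (1 <= a <= p)%N ->
     GaussBorel (moment_mx mu 0 a N) (L 0%N a) (U 0%N a)) ->
  forall a b, (1 <= a <= p)%N -> (1 <= b <= q)%N ->
  let Ub := invmx (U b 0%N) *m U b.-1 0%N in
  let La := L 0%N a.-1 *m invmx (L 0%N a) in
  [/\ (forall n, (1 <= n <= N - 1)%N ->
         mxe La n n.-1 = mxe (L 0%N a.-1) n n.-1 - mxe (L 0%N a) n n.-1),
      (forall n, (n <= N - 1)%N ->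
         mxe Ub n n = mxe (U b.-1 0%N) n n / mxe (U b 0%N) n n),
      (forall n, (1 <= n <= N - 1)%N ->
         mxe La n n.-1 = mxe (U 0%N a) n.-1 n.-1 / mxe (U 0%N a.-1) n n) &
      (forall n, (n + 2 <= N)%N ->
         mxe Ub n n = (1 - (n == 0%N)%:R) * mxe (L b 0%N) n n.-1
                      - mxe (L b.-1 0%N) n.+1 n)].
Proof.
move=> _ _ N_gt0 _ GB00 GBb GBa a b a_range b_range Ub La.
have GBb1 : GaussBorel (moment_mx mu b.-1 0 N) (L b.-1 0%N) (U b.-1 0%N).
  by case: b.-1 (leq_pred b) => [_ | b' b'_le]; [exact: GB00 | apply: GBb; lia].
have GBa1 : GaussBorel (moment_mx mu 0 a.-1 N) (L 0%N a.-1) (U 0%N a.-1).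
  by case: a.-1 (leq_pred a) => [_ | a' a'_le]; [exact: GB00 | apply: GBa; lia].
have [[_ uUb1 _ _] [_ uUb unitUb _]] := (GBb1, GBb b b_range).
have [[lLa1 _ _ _] [lLa _ _ _]] := (GBa1, GBa a a_range).
split=> n n_range.
- have [n_lt n1_lt] : (n < N)%N /\ (n.-1 < N)%N by lia.
  rewrite !(mxeE _ n_lt n1_lt); apply: mulmx_lower_unitriangular_inv_subdiag => //=.
  by lia.
- have n_lt : (n < N)%N by lia.
  by rewrite !(mxeE _ n_lt n_lt); apply: mulmx_inv_upper_diag.
- have [n_lt n1_lt] : (n < N)%N /\ (n.-1 < N)%N by lia.
  rewrite (mxeE _ n_lt n1_lt) (mxeE _ n1_lt n1_lt) (mxeE _ n_lt n_lt).
  apply: (GaussBorel_col_shift_subdiag GBa1 (GBa a a_range)) => [r c c' cc'|/=].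
    by apply: moment_mx_col_shift; lia.
  by lia.
- have [n_lt [n1_lt n1'_lt]] : (n < N)%N /\ (n.+1 < N)%N /\ (n.-1 < N)%N by lia.
  rewrite (mxeE _ n_lt n_lt) (mxeE _ n_lt n1'_lt) (mxeE _ n1_lt n_lt).
  apply: (GaussBorel_row_shift_diag GBb1 (GBb b b_range)) => // r r' c rr'.
  by apply: moment_mx_row_shift; lia.
Qed.
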